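(* Let $\Lambda$ be a finite-dimensional algebra over an algebraically closed field $K$ and let $\Lambda\twoheadrightarrow\Lambda'$ be a surjective algebra homomorphism. Suppose there exist a dimension vector $\mathbf{d}'$ and $\theta'\in K_0(\mathrm{proj}\,\Lambda')$ such that there are infinitely many isomorphism classes of $\theta'$-stable $\Lambda'$-modules of dimension vector $\mathbf{d}'$. Then there exist a dimension vector $\mathbf{d}$ and $\theta\in K_0(\mathrm{proj}\,\Lambda)$ such that there are infinitely many isomorphism classes of $\theta$-stable $\Lambda$-modules of dimension vector $\mathbf{d}$.
   Context: Modules are finite-dimensional right modules; $\Lambda'$-modules are regarded as $\Lambda$-modules by restriction along the surjection. $K_0(\mathrm{proj}\,\Lambda)\cong K_0(\mathrm{mod}\,\Lambda)\cong\mathbb{Z}^n$ via indecomposable projectives and simples; the dimension vector of $M$ is $[M]\in K_0(\mathrm{mod}\,\Lambda)$; $\langle-,-\rangle$ is the canonical pairing ($\langle[P],[M]\rangle=\dim\mathrm{Hom}_\Lambda(P,M)$). For $\theta\in K_0(\mathrm{proj}\,\Lambda)$, $M$ is $\theta$-stable if $\langle\theta,[M]\rangle=0$ and $\langle\theta,[M']\rangle<0$ for every nonzero proper submodule $M'\subset M$. *)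

From HB Require Import structures.
From mathcomp Require Import all_boot all_order all_algebra all_field.
Set Implicit Arguments. Unset Strict Implicit. Unset Printing Implicit Defensive.
Import Order.TTheory GRing.Theory Num.Theory.
Local Open Scope ring_scope.

(* A finite-dimensional right A-module, realized on row vectors K^m:
   v . a := v *m ract a.  Right action: ract (a * b) = ract a *m ract b. *)
Record rmod (K : fieldType) (A : falgType K) := RMod {
  rdim : nat;
  ract : A -> 'M[K]_rdim;
  ract_lin : forall (c : K) (x y : A), ract (c *: x + y) = c *: ract x + ract y;
  ract1 : ract 1 = 1%:M;
  ractM : forall a b : A, ract (a * b) = ract a *m ract b
}.

Definition mod_iso (K : fieldType) (A : falgType K) (M N : rmod A) : Prop :=
  exists P : 'M[K]_(rdim M, rdim N),
    [/\ row_free P, row_full P & forall a : A, ract M a *m P = P *m ract N a].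

Definition submod (K : fieldType) (A : falgType K) (M : rmod A)
  (U : 'M[K]_(rdim M)) : Prop := forall a : A, (U *m ract M a <= U)%MS.

Definition idempotent (K : fieldType) (A : falgType K) (e : A) : Prop := e * e = e.

(* An element of K_0(proj A): a formal Z-combination  sum_j c_j [e_j A]
   of classes of projectives e_j A, with e_j idempotent. *)
Definition K0proj (K : fieldType) (A : falgType K) := seq (int * A).
Definition K0proj_wf (K : fieldType) (A : falgType K) (th : K0proj A) : Prop :=
  forall p, p \in th -> idempotent p.2.

(* Canonical pairing <theta, [U]> for the submodule U of M:
   <[eA], [N]> = dim Hom_A(eA, N) = dim (N e), and U e = rowspace (U *m ract e). *)
Definition pairing (K : fieldType) (A : falgType K) (th : K0proj A) (M : rmod A)
  (U : 'M[K]_(rdim M)) : int :=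
  \sum_(p <- th) p.1 * ((\rank (U *m ract M p.2))%:Z).

Arguments pairing {K A} th M U.

Definition stable (K : fieldType) (A : falgType K) (th : K0proj A) (M : rmod A) : Prop :=
  pairing th M 1%:M = 0 /\
  forall U : 'M[K]_(rdim M), submod U -> \rank U != 0%N -> (\rank U < rdim M)%N ->
    pairing th M U < 0.

(* Dimension vectors: [M] in K_0(mod A) is recorded by the function
   e |-> dim Hom_A(eA, M) = dim (M e) on idempotents e (its values on a
   complete set of primitive idempotents are the composition multiplicities,
   K algebraically closed). *)
Definition dimvec (K : fieldType) (A : falgType K) := A -> nat.
Definition has_dimvec (K : fieldType) (A : falgType K) (M : rmod A) (d : dimvec A) : Prop :=
  forall e : A, idempotent e -> \rank (ract M e) = d e.

Definition inf_iso_classes (K : fieldType) (A : falgType K) (P : rmod A -> Prop) : Prop :=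
  exists F : nat -> rmod A,
    (forall i, P (F i)) /\ (forall i j, i <> j -> ~ mod_iso (F i) (F j)).

From Pilot Require Import Defs.
From HB Require Import structures.
From mathcomp Require Import all_boot all_order all_algebra all_field.
From mathcomp Require Import ring.
Set Implicit Arguments. Unset Strict Implicit. Unset Printing Implicit Defensive.
Import GRing.Theory VectorInternalTheory.
Local Open Scope ring_scope.

(* Restriction of scalars along the surjection f makes mod L' a full
   subcategory of mod L closed under submodules: L-submodules and L-linear maps
   between restricted modules are L'-submodules and L'-linear maps.  So
   restriction preserves theta-stability and non-isomorphism, as soon as theta'
   is the image of some theta under [eL] |-> [f(e)L'].  Such a theta exists
   because idempotents lift along f: if f x is idempotent and q(x) = 0 with
   q <> 0, write q X (X - 1) = r (X - 1)^m with r(1) <> 0 and take a Bezout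
   relation u r + v (X - 1)^m = 1.  Then g := u r satisfies g^2 = g modulo
   q X (X - 1), g(0) = 0 and g(1) = 1, so g(x) is idempotent and
   f (g(x)) = g(f x) = f x. *)

Section IdempotentPolynomial.
Variable K : fieldType.

Lemma idempotent_poly_mod (Q : {poly K}) : Q != 0 -> root Q 0 -> root Q 1 ->
  exists g : {poly K}, [/\ Q %| g * g - g, g.[0] = 0 & g.[1] = 1].
Proof.
move=> Q_neq0 Q0 Q1.
have [m [r r1 defQ]] := multiplicity_XsubC Q 1.
rewrite Q_neq0 /= in r1.
have m_gt0 : (0 < m)%N.
  by case: m defQ => // defQ; rewrite defQ expr0 mulr1 (negPf r1) in Q1.
have r0 : root r 0.
  move: Q0; rewrite defQ rootE hornerM mulf_eq0 => /orP[//|].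
  by rewrite !hornerE expf_eq0 oppr_eq0 oner_eq0 andbF.
have /Bezout_eq1_coprimepP[[u v] /= Huv] : coprimep r (('X - 1%:P) ^+ m).
  by rewrite coprimep_expr // coprimep_XsubC.
exists (u * r); split.
- have -> : u * r * (u * r) - u * r = - (u * v) * Q.
    transitivity (u * r * (u * r - (u * r + v * ('X - 1%:P) ^+ m))).
      by rewrite Huv mulrBr mulr1.
    by rewrite defQ; ring.
  exact: dvdp_mull.
- by rewrite hornerM (rootP r0) mulr0.
- move/(congr1 (horner^~ 1)): Huv.
  by rewrite !hornerE subrr expr0n gtn_eqF // mulr0 addr0.
Qed.

End IdempotentPolynomial.

Section HornerAlg.
Variables (K : fieldType) (L : falgType K).

Lemma horner_alg_idempotent (e : L) (p : {poly K}) : Defs.idempotent e ->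
  horner_alg e p = p.[0]%:A + (p.[1] - p.[0]) *: e.
Proof.
move=> ee; elim/poly_ind: p => [|p c IHp].
  by rewrite rmorph0 !horner0 subrr !scale0r addr0.
rewrite rmorphD rmorphM /= IHp horner_algX horner_algC !hornerE.
rewrite mulrDl -!scalerAl mul1r ee -scalerDl.
by rewrite addrK [p.[0] + _]addrC subrK addrC.
Qed.

Lemma horner_alg_scaleXn (a : L) (c : K) (i : nat) :
  horner_alg a (c *: 'X^i) = c *: a ^+ i.
Proof.
by rewrite -mul_polyC rmorphM /= horner_algC rmorphXn /= horner_algX mulr_algl.
Qed.

Lemma horner_alg_annihilator (a : L) :
  exists2 q : {poly K}, q != 0 & horner_alg a q = 0.
Proof.
pose n := (dim L).+1; pose B := \matrix_(i < n) v2r (a ^+ i).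
have /rowV0Pn[u /sub_kermxP uB0 u_neq0] : kermx B != 0.
  by rewrite kermx_eq0 /row_free neq_ltn (leq_ltn_trans (rank_leq_col B)).
exists (rVpoly u).
  apply: contraNneq u_neq0 => /(congr1 (@poly_rV K n)).
  by rewrite rVpolyK linear0 => ->.
apply: v2r_inj; rewrite linear0 -uB0 mulmx_sum_row /rVpoly poly_def rmorph_sum.
rewrite linear_sum; apply: eq_bigr => i _.
by rewrite valK rowK -linearZ /= horner_alg_scaleXn.
Qed.

End HornerAlg.

Section LiftIdempotent.
Variables (K : fieldType) (L L' : falgType K) (f : {lrmorphism L -> L'}).

Lemma lrmorph_horner_alg (x : L) (p : {poly K}) :
  f (horner_alg x p) = horner_alg (f x) p.
Proof.
elim/poly_ind: p => [|p c IHp]; first by rewrite !rmorph0.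
by rewrite !rmorphD !rmorphM /= IHp !horner_algX !horner_algC rmorph_alg.
Qed.

Lemma lift_idempotent (x : L) : Defs.idempotent (f x) ->
  exists2 e : L, Defs.idempotent e & f e = f x.
Proof.
move=> fx_idem; have [q q_neq0 qx0] := horner_alg_annihilator x.
pose Q := q * ('X * ('X - 1%:P)).
have [|||g [/dvdpP[h gE] g0 g1]] := @idempotent_poly_mod _ Q.
- by rewrite !mulf_neq0 ?polyX_eq0 ?polyXsubC_eq0.
- by rewrite !rootM rootX eqxx orbT.
- by rewrite !rootM root_XsubC eqxx !orbT.
exists (horner_alg x g).
  apply/eqP; rewrite -subr_eq0 -rmorphM -rmorphB /= gE.
  by rewrite !rmorphM /= qx0 mul0r mulr0.
rewrite lrmorph_horner_alg horner_alg_idempotent // g0 g1.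
by rewrite scale0r add0r subr0 scale1r.
Qed.

End LiftIdempotent.

Section Restriction.
Variables (K : fieldType) (L L' : falgType K) (f : {lrmorphism L -> L'}).

Definition map_K0proj (th : K0proj L) : K0proj L' :=
  [seq (p.1, f p.2) | p <- th].

Section ResMod.
Variable M : rmod L'.

Fact res_ract_lin (c : K) (x y : L) :
  ract M (f (c *: x + y)) = c *: ract M (f x) + ract M (f y).
Proof. by rewrite linearP ract_lin. Qed.

Fact res_ract1 : ract M (f 1) = 1%:M.
Proof. by rewrite rmorph1 ract1. Qed.

Fact res_ractM (a b : L) : ract M (f (a * b)) = ract M (f a) *m ract M (f b).
Proof. by rewrite rmorphM ractM. Qed.

Definition res_mod : rmod L := RMod res_ract_lin res_ract1 res_ractM.

Lemma pairing_res (th : K0proj L) (U : 'M[K]_(rdim M)) :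
  pairing th res_mod U = pairing (map_K0proj th) M U.
Proof. by rewrite /pairing big_map. Qed.

Lemma has_dimvec_res (d' : dimvec L') :
  has_dimvec M d' -> has_dimvec res_mod (d' \o f).
Proof.
by move=> dimM e e_idem; apply: dimM; rewrite /Defs.idempotent -rmorphM e_idem.
Qed.

End ResMod.

Hypothesis f_surj : forall y : L', exists x : L, f x = y.

Lemma submod_res (M : rmod L') (U : 'M[K]_(rdim M)) :
  submod (M := res_mod M) U -> submod U.
Proof. by move=> sU y; have [x <-] := f_surj y; apply: sU. Qed.

Lemma stable_res (th : K0proj L) (M : rmod L') :
  stable (map_K0proj th) M -> stable th (res_mod M).
Proof.
move=> [th0 thU]; split=> [|U /submod_res]; rewrite pairing_res //; exact: thU.
Qed.

Lemma mod_iso_res (M N : rmod L') :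
  mod_iso (res_mod M) (res_mod N) -> mod_iso M N.
Proof.
move=> [P [P_free P_full Plin]]; exists P; split=> // y.
by have [x <-] := f_surj y; apply: Plin.
Qed.

Lemma lift_K0proj (th' : K0proj L') : K0proj_wf th' ->
  exists2 th : K0proj L, K0proj_wf th & map_K0proj th = th'.
Proof.
elim: th' => [|[c e'] th' IHth] th'_wf; first by exists [::].
have [|th th_wf <-] := IHth.
  by move=> p p_th'; apply: th'_wf; rewrite inE p_th' orbT.
have [x fx] := f_surj e'.
have [|e e_idem fe] := @lift_idempotent _ _ _ f x.
  by rewrite fx; apply: (th'_wf (c, e')); rewrite inE eqxx.
exists ((c, e) :: th); last by rewrite /map_K0proj /= fe fx.
by move=> p; rewrite inE => /orP[/eqP -> // | /th_wf].
Qed.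

End Restriction.

Theorem proposition3p8 (K : closedFieldType) (L L' : falgType K)
  (f : {lrmorphism L -> L'}) (f_surj : forall y : L', exists x : L, f x = y) :
  (exists (d' : dimvec L') (th' : K0proj L'), K0proj_wf th' /\
     inf_iso_classes (fun M : rmod L' => stable th' M /\ has_dimvec M d')) ->
  exists (d : dimvec L) (th : K0proj L), K0proj_wf th /\
     inf_iso_classes (fun M : rmod L => stable th M /\ has_dimvec M d).
Proof.
move=> [d' [th' [th'_wf [F [FP F_noniso]]]]].
have [th th_wf th'E] := lift_K0proj f_surj th'_wf; subst th'.
exists (d' \o f), th; split=> //.
exists (fun i => res_mod f (F i)).
split=> [i | i j /F_noniso + /(mod_iso_res f_surj)//].
have [F_stable F_dim] := FP i.
by split; [exact: stable_res F_stable | exact: has_dimvec_res F_dim].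
Qed.
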